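(* Let $(X,\le)$ be a globally hyperbolic poset. Then $X$, equipped with its interval topology, is a locally compact Hausdorff space. Moreover: (i) the Lawson topology of $X$ is contained in the interval topology; (ii) the partial order $\le$ is a closed subset of $X\times X$ (with the product of the interval topologies); (iii) every directed subset of $X$ that has an upper bound has a supremum; (iv) every filtered subset of $X$ that has a lower bound has an infimum.
   Context: For a poset $(P,\sqsubseteq)$: a nonempty $S\subseteq P$ is directed if any two elements of $S$ have an upper bound in $S$, and filtered if any two elements of $S$ have a lower bound in $S$; $\bigsqcup S$ and $\bigwedge S$ denote the supremum and infimum of $S$ when they exist. Write $\uparrow F=\{y:\exists x\in F,\ x\sqsubseteq y\}$. For $x,y\in P$, $x\ll y$ iff for every directed $S\subseteq P$ that has a supremum, $y\sqsubseteq\bigsqcup S$ implies $x\sqsubseteq s$ for some $s\in S$. Put $\Downarrow x=\{a: a\ll x\}$ and $\Uparrow x=\{a: x\ll a\}$. A basis of $P$ is a subset $B$ such that for every $x$, $B\cap\Downarrow x$ contains a directed set with supremum $x$; $P$ is continuous if it has a basis. A continuous poset $P$ is bicontinuous if (1) for all $x,y\in P$: $x\ll y$ iff for every filtered $S\subseteq P$ having an infimum, $\bigwedge S\sqsubseteq x$ implies $s\sqsubseteq y$ for some $s\in S$; and (2) for every $x$, $\Uparrow x$ is filtered with infimum $x$. On a bicontinuous poset the sets $(a,b)=\{x: a\ll x\ll b\}$ form a basis for a topology, called the interval topology. The Lawson topology on a continuous poset $P$ is the topology with basis all sets $\Uparrow x\setminus\uparrow F$ with $x\in P$ and $F\subseteq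 P$ finite. A globally hyperbolic poset is a bicontinuous poset $(X,\le)$ such that every closed interval $[a,b]=\{x: a\le x\le b\}$ is compact in the interval topology. *)

From HB Require Import structures.
From mathcomp Require Import all_boot all_order.
From mathcomp Require Import all_classical.
From mathcomp Require Import topology.

Set Implicit Arguments. Unset Strict Implicit. Unset Printing Implicit Defensive.
Import Order.TTheory.
Local Open Scope classical_set_scope.
Local Open Scope order_scope.

Section Posets.
Context {d : Order.disp_t} {X : porderType d}.
Implicit Types (S F : set X) (x y : X).

Definition directed S :=
  (exists x, S x) /\ forall x y, S x -> S y -> exists2 z, S z & x <= z /\ y <= z.

Definition filtered S :=
  (exists x, S x) /\ forall x y, S x -> S y -> exists2 z, S z & z <= x /\ z <= y.

Definition upset F : set X := [set y | exists2 x, F x & x <= y].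

Definition way_below x y :=
  forall S s, directed S -> supremums S s -> y <= s -> exists2 z, S z & x <= z.

Definition ddarrow x : set X := [set a | way_below a x].
Definition uuarrow x : set X := [set a | way_below x a].

Definition is_basis (B : set X) :=
  forall x, exists D, [/\ D `<=` B `&` ddarrow x, directed D & supremums D x].

Definition continuous_poset := exists B, is_basis B.

Definition bicontinuous :=
  [/\ continuous_poset,
      (forall x y, way_below x y <->
         (forall S i, filtered S -> infimums S i -> i <= x ->
            exists2 s, S s & s <= y))
    & (forall x, filtered (uuarrow x) /\ infimums (uuarrow x) x)].

Definition open_interval a b : set X := [set x | way_below a x /\ way_below x b].

Definition closed_interval a b : set X := [set x | a <= x /\ x <= b].

Definition lawson_basic : set (set X) :=
  [set U | exists x F, finite_set F /\ U = uuarrow x `\` upset F].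

Definition interval_basic : set (set X) :=
  [set U | exists a b, U = open_interval a b].

End Posets.

(* X equipped with the interval topology: the topology generated by the
   sets (a,b) *)
Definition interval_topology {d} (X : porderType d) : Type := X.
Definition lawson_topology {d} (X : porderType d) : Type := X.

Section Topologies.
Context {d : Order.disp_t} {X : porderType d}.
HB.instance Definition _ := Order.POrder.on (interval_topology X).
HB.instance Definition _ := @isSubBaseTopological.Build (interval_topology X)
  (set X) (@interval_basic d X) id.
HB.instance Definition _ := Order.POrder.on (lawson_topology X).
HB.instance Definition _ := @isSubBaseTopological.Build (lawson_topology X)
  (set X) (@lawson_basic d X) id.
End Topologies.

Definition globally_hyperbolic {d} (X : porderType d) :=
  @bicontinuous d X /\
  forall a b : X, compact (closed_interval a b : set (interval_topology X)).

From HB Require Import structures.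
From mathcomp Require Import all_boot all_order.
From mathcomp Require Import all_classical.
From mathcomp Require Import topology.
From mathcomp Require Import finmap.
Local Open Scope classical_set_scope.
Local Open Scope order_scope.
Import Order.TTheory.

(* If x is not below y, bicontinuity yields a << x and y << b with a not below
   b: a comes from a directed set of elements way below x with supremum x, and
   b from the filter of elements way above y, whose infimum is y.  The interval
   neighbourhoods (a, _) of x and (_, b) of y then separate x from y in the
   order, so the order is closed, the interval topology is Hausdorff and
   principal up- and down-sets are closed.  The Lawson-basic sets are then
   interval-open: \Uparrow x is a union of intervals (x, e), and \uparrow F is
   a finite union of closed up-sets.  Every point lies in some (c, e), so the
   compact intervals [c, e] make the space locally compact.  Finally, for S
   directed with an element s0 and an upper bound u, the closed sets
   {z | s <= z} `&` lbound (ubound S), s in S, form a directed family inside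
   the compact [s0, u]; a common point is a supremum of S.  Infima are dual. *)

Lemma compact_directed_In0 {T : topologicalType} {K : set T} {I : Type}
    {D : set I} {A : I -> set T} {i0 : I} :
  compact K -> (forall i, D i -> closed (A i) /\ A i !=set0) ->
  (forall i j, D i -> D j -> exists2 k, D k & A k `<=` A i `&` A j) ->
  D i0 -> A i0 `<=` K -> K `&` \bigcap_(i in D) A i !=set0.
Proof.
move=> cptK clA dirA Di0 AK.
have FF : Filter (filter_from D A).
  exact: filter_from_filter (ex_intro _ i0 Di0) dirA.
have PF : ProperFilter (filter_from D A).
  by apply: filter_from_proper => i /clA [].
have [p [Kp clp]] := cptK _ PF (ex_intro2 _ _ i0 Di0 AK).
exists p; split => // i Di; have [clAi _] := clA i Di.
by apply: clAi => B; apply: clp; exists i.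
Qed.

Section IntervalTopology.
Context {d : Order.disp_t} {X : porderType d}.

Lemma way_below_le {a b : X} : way_below a b -> a <= b.
Proof.
move=> ab; have dirb : directed [set b] by split => [|x y -> ->]; exists b.
have supb : supremums [set b] b by rewrite supremums1.
by have [z -> //] := ab [set b] b dirb supb (le_refl b).
Qed.

Lemma open_interval_open (a b : X) :
  open (open_interval a b : set (interval_topology X)).
Proof.
exists [set open_interval a b]; last by rewrite bigcup_set1.
move=> _ ->; exists [fset (open_interval a b)]%fset.
  by move=> ?; rewrite !inE => /eqP ->; apply/mem_set; exists a, b.
by rewrite bigcap_fset big_seq_fset1.
Qed.

Lemma nbhs_open_interval {a b z : X} : way_below a z -> way_below z b ->
  nbhs (z : interval_topology X) (open_interval a b).
Proof.
by move=> az zb; apply: open_nbhs_nbhs; split; first exact: open_interval_open.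
Qed.

End IntervalTopology.

Section Bicontinuous.
Context {d : Order.disp_t} {X : porderType d}.
Hypothesis bicontX : @bicontinuous d X.

Let T := interval_topology X.

Lemma exists_way_below (x : X) : exists a, way_below a x.
Proof.
have [[B baseB] _ _] := bicontX; have [D [DB [[a Da] _] _]] := baseB x.
by exists a; have [] := DB a Da.
Qed.

Lemma exists_way_above (x : X) : exists b, way_below x b.
Proof. by have [_ _ /(_ x) [[[b xb] _] _]] := bicontX; exists b. Qed.

Lemma not_le_way_below {x y : X} : ~ x <= y ->
  exists a b, [/\ way_below a x, way_below y b & ~ a <= b].
Proof.
move=> nxy; have [[B baseB] _ uuarrowE] := bicontX.
have [D [DB _ [_ leastx]]] := baseB x.
have [a Da nay] : exists2 a, D a & ~ a <= y.
  apply: contrapT => /forall2NP noa; apply/nxy/leastx => a Da.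
  by case: (noa a) => // /contrapT.
have [_ [_ greatesty]] := uuarrowE y.
have [b yb nab] : exists2 b, way_below y b & ~ a <= b.
  apply: contrapT => /forall2NP nob; apply/nay/greatesty => b yb.
  by case: (nob b) => // /contrapT.
by exists a, b; split => //; have [] := DB a Da.
Qed.

Lemma not_le_separated {x y : X} : ~ x <= y ->
  exists2 U, nbhs (x : T) U & exists2 V, nbhs (y : T) V &
    forall u v : X, U u -> V v -> ~ u <= v.
Proof.
move=> nxy; have [a [b [ax yb nab]]] := not_le_way_below nxy.
have [e xe] := exists_way_above x; have [c cy] := exists_way_below y.
exists (open_interval a e); first exact: nbhs_open_interval.
exists (open_interval c b); first exact: nbhs_open_interval.
move=> u v [/way_below_le au _] [_ /way_below_le vb] uv.
exact/nab/(le_trans au)/(le_trans uv).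
Qed.

Lemma interval_hausdorff : hausdorff_space T.
Proof.
move=> x y clxy; apply/le_anti/andP.
split; apply: contrapT => /not_le_separated [U U0 [V V0 UV]].
  by have [w [Uw Vw]] := clxy U V U0 V0; exact: UV Uw Vw (le_refl w).
by have [w [Vw Uw]] := clxy V U V0 U0; exact: UV Uw Vw (le_refl w).
Qed.

Lemma le_closed : closed [set p : T * T | p.1 <= p.2].
Proof.
move=> [x y] clxy; apply: contrapT => /not_le_separated [U xU [V yV UV]].
have xyUV : nbhs ((x, y) : T * T) (U `*` V) by exists (U, V).
have [[u v] [/= uv [/= Uu Vv]]] := clxy _ xyUV.
exact: UV Uu Vv uv.
Qed.

Lemma closed_ge (s : X) : closed ([set z | s <= z] : set T).
Proof.
move=> z clz; apply: contrapT => /not_le_separated [U sU [V zV UV]].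
have [w [sw Vw]] := clz V zV; exact: UV (nbhs_singleton sU) Vw sw.
Qed.

Lemma closed_le (s : X) : closed ([set z | z <= s] : set T).
Proof.
move=> z clz; apply: contrapT => /not_le_separated [U zU [V sV UV]].
have [w [ws Uw]] := clz U zU; exact: UV Uw (nbhs_singleton sV) ws.
Qed.

Lemma closed_ubound (S : set X) : closed (ubound S : set T).
Proof. by apply: closed_bigI => s _; apply: closed_ge. Qed.

Lemma closed_lbound (S : set X) : closed (lbound S : set T).
Proof. by apply: closed_bigI => s _; apply: closed_le. Qed.

Lemma uuarrow_open (x : X) : open (uuarrow x : set T).
Proof.
rewrite openE => z xz; have [e ze] := exists_way_above z.
by apply: filterS (nbhs_open_interval xz ze) => w [].
Qed.

Lemma upset_closed (F : set X) : finite_set F -> closed (upset F : set T).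
Proof.
by move=> finF; apply: closed_bigcup finF _ => y _; exact: closed_ge.
Qed.

Lemma lawson_basic_open (U : set X) : lawson_basic U -> open (U : set T).
Proof.
move=> [x [F [finF ->]]].
by apply: openI; [apply: uuarrow_open | apply/closed_openC/upset_closed].
Qed.

Lemma lawson_open_interval_open (U : set X) :
  @open (lawson_topology X) U -> open (U : set T).
Proof.
move=> [Bs subBs <-]; apply: bigcup_open => V /subBs [F subF <-].
rewrite openE => z Fz; apply: filter_bigI => W FW.
apply: open_nbhs_nbhs; split; last exact: Fz.
by apply/lawson_basic_open/set_mem/subF.
Qed.

End Bicontinuous.

Section GloballyHyperbolic.
Context {d : Order.disp_t} {X : porderType d}.
Hypothesis ghX : globally_hyperbolic X.

Let bicontX : @bicontinuous d X := ghX.1.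
Let T := interval_topology X.

Lemma interval_locally_compact : locally_compact [set: T].
Proof.
move=> x _; rewrite withinET.
have [c cx] := exists_way_below bicontX x.
have [e xe] := exists_way_above bicontX x.
exists (closed_interval c e).
  apply: filterS (nbhs_open_interval cx xe) => w [cw we].
  by split; apply: way_below_le.
split; first exact: ghX.2.
exact: compact_closed (interval_hausdorff bicontX) (ghX.2 c e).
Qed.

Lemma directed_bounded_supremum (S : set X) :
  directed S -> (exists u, ubound S u) -> exists s, supremums S s.
Proof.
move=> [[s0 Ss0] dirS] [u Su].
pose A s : set T := [set z | s <= z] `&` lbound (ubound S).
have clA s : S s -> closed (A s) /\ A s !=set0.
  move=> Ss; split.
    exact: closedI (closed_ge bicontX s) (closed_lbound bicontX _).
  by exists s; split => [|v]; [apply: le_refl | apply].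
have dirA s t : S s -> S t -> exists2 r, S r & A r `<=` A s `&` A t.
  move=> Ss St; have [r Sr [sr tr]] := dirS s t Ss St.
  by exists r => // z [rz lbz]; split; split => //; apply: le_trans rz.
have [|p [_ Ap]] := compact_directed_In0 (ghX.2 s0 u) clA dirA Ss0.
  by move=> z [s0z lbz]; split => //; apply: lbz.
exists p; split; last by have [] := Ap s0 Ss0.
by move=> s Ss; have [] := Ap s Ss.
Qed.

Lemma filtered_bounded_infimum (S : set X) :
  filtered S -> (exists l, lbound S l) -> exists i, infimums S i.
Proof.
move=> [[s0 Ss0] filS] [l Sl].
pose A s : set T := [set z | z <= s] `&` ubound (lbound S).
have clA s : S s -> closed (A s) /\ A s !=set0.
  move=> Ss; split.
    exact: closedI (closed_le bicontX s) (closed_ubound bicontX _).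
  by exists s; split => [|v]; [apply: le_refl | apply].
have filA s t : S s -> S t -> exists2 r, S r & A r `<=` A s `&` A t.
  move=> Ss St; have [r Sr [rs rt]] := filS s t Ss St.
  by exists r => // z [zr ubz]; split; split => //; apply: le_trans zr _.
have [|p [_ Ap]] := compact_directed_In0 (ghX.2 l s0) clA filA Ss0.
  by move=> z [zs0 ubz]; split => //; apply: ubz.
exists p; split; last by have [] := Ap s0 Ss0.
by move=> s Ss; have [] := Ap s Ss.
Qed.

End GloballyHyperbolic.

Theorem mainTheorem1 (d : Order.disp_t) (X : porderType d) :
  globally_hyperbolic X ->
  (locally_compact [set: interval_topology X] /\
   hausdorff_space (interval_topology X)) /\
  [/\ (forall U : set X, @open (lawson_topology X) U ->
                         @open (interval_topology X) U),
      closed [set p : interval_topology X * interval_topology X | p.1 <= p.2],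
      (forall S : set X, directed S -> (exists u, ubound S u) ->
                         exists s, supremums S s)
    & (forall S : set X, filtered S -> (exists l, lbound S l) ->
                         exists i, infimums S i)].
Proof.
move=> ghX; have bicontX := ghX.1.
split.
  by split; [exact: interval_locally_compact | exact: interval_hausdorff].
split.
- exact: lawson_open_interval_open.
- exact: le_closed.
- exact: directed_bounded_supremum.
- exact: filtered_bounded_infimum.
Qed.
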